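(* Let $(\mathfrak H_{-,+},\mathfrak H,G,W)$ be a reduction tuple for $A^*$, and define $\Gamma_0\psi:=G\psi_2$ and $\Gamma_1\psi:=\mathrm iWG\psi_1$ for $\psi=\{\psi_1,\psi_2\}\in(\mathrm{dom}A^* )^2$. Then $(\mathfrak H_{-,+},\mathfrak H,\Gamma_0,\Gamma_1)$ is an m-boundary tuple for $M^*$.
   Context: $A$ is a closed densely defined symmetric operator in a Hilbert space $\mathfrak X$; $S$ a bounded uniformly positive selfadjoint operator in $\mathfrak X\oplus\mathfrak X$; $\mathfrak X^{2,S}$ is $\mathfrak X\oplus\mathfrak X$ with the inner product $(S\cdot|\cdot)_{\mathfrak X^2}$. $M\{\psi_1,\psi_2\}:=S^{-1}\{\mathrm iA\psi_2,-\mathrm iA\psi_1\}$ on $(\mathrm{dom}A)^2$ is closed symmetric in $\mathfrak X^{2,S}$ with adjoint $M^*\{\psi_1,\psi_2\}=S^{-1}\{\mathrm iA^*\psi_2,-\mathrm iA^*\psi_1\}$ on $(\mathrm{dom}A^* )^2$. Mixed-order duality: Hilbert spaces $\mathfrak H,\mathfrak H_{-,+},\mathfrak H_{+,-}$ with $\widetilde{\mathfrak H}_{\mp,\pm}:=\mathfrak H\cap\mathfrak H_{\mp,\pm}$ dense in $\mathfrak H$ and $\mathfrak H_{\mp,\pm}$, forms $\|h\|^2_{\mathfrak H_{\mp,\pm}}$ on $\widetilde{\mathfrak H}_{\mp,\pm}$ closed in $\mathfrak H$, and $\|h\|_{\mathfrak H_{\pm,\mp}}=\sup_{0\ne g\in\widetilde{\mathfrak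 H}_{\mp,\pm}}|(g|h)_{\mathfrak H}|/\|g\|_{\mathfrak H_{\mp,\pm}}$ for $h\in\widetilde{\mathfrak H}_{\pm,\mp}$. $\langle\cdot|\cdot\rangle_{\mathfrak H}$ is the unique bounded sesquilinear extension of $(\cdot|\cdot)_{\mathfrak H}$ to $\mathfrak H_{-,+}\times\mathfrak H_{+,-}$, with $\langle h_{+,-}|h_{-,+}\rangle_{\mathfrak H}:=\overline{\langle h_{-,+}|h_{+,-}\rangle_{\mathfrak H}}$. A reduction tuple for $A^*$: $G:\mathrm{dom}A^*\to\mathfrak H_{-,+}$ linear surjective, $W:\mathfrak H_{-,+}\to\mathfrak H_{+,-}$ a linear homeomorphism, and $(A^*f|g)_{\mathfrak X}-(f|A^*g)_{\mathfrak X}=\langle Gf|WGg\rangle_{\mathfrak H}$ for $f,g\in\mathrm{dom}A^*$. An m-boundary tuple for a closed densely defined symmetric $\mathcal A$'s adjoint $\mathcal A^*$ (here $\mathcal A=M$ in $\mathfrak X^{2,S}$) is $(\mathfrak H_{-,+},\mathfrak H,\Gamma_0,\Gamma_1)$ with linear $\Gamma_0:\mathrm{dom}\mathcal A^*\to\mathfrak H_{-,+}$, $\Gamma_1:\mathrm{dom}\mathcal A^*\to\mathfrak H_{+,-}$ such that (M1) $f\mapsto\{\Gamma_0f,\Gamma_1f\}$ maps $\mathrm{dom}\mathcal A^*$ onto $\mathfrak H_{-,+}\oplus\mathfrak H_{+,-}$ and (M2) $(\mathcal A^*f|g)-(f|\mathcal A^*g)=\langle\Gamma_1f|\Gamma_0g\rangle_{\mathfrak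 H}-\langle\Gamma_0f|\Gamma_1g\rangle_{\mathfrak H}$ for all $f,g\in\mathrm{dom}\mathcal A^*$. *)

(* purely algebraic rendering of the Hilbert-space setting. *)
From HB Require Import structures.
From mathcomp Require Import all_boot all_order all_algebra.
Set Implicit Arguments. Unset Strict Implicit. Unset Printing Implicit Defensive.
Import Order.TTheory GRing.Theory Num.Theory Num.Syntax.
Local Open Scope ring_scope.

Section Defs.
Variable C : numClosedFieldType.

(* A (possibly non-complete) inner product, linear in the first argument,
   conjugate-linear in the second. *)
Definition inner_product (X : lmodType C) (ip : X -> X -> C) : Prop :=
  [/\ (forall (a : C) (x y z : X), ip (a *: x + y) z = a * ip x z + ip y z),
      (forall x y : X, ip y x = (ip x y)^*),
      (forall x : X, 0 <= ip x x)
    & (forall x : X, ip x x = 0 -> x = 0)].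

Definition subspace (X : lmodType C) (D : X -> Prop) : Prop :=
  D 0 /\ forall (a : C) (x y : X), D x -> D y -> D (a *: x + y).

Definition linear_on (X Y : lmodType C) (D : X -> Prop) (f : X -> Y) : Prop :=
  forall (a : C) (x y : X), D x -> D y -> f (a *: x + y) = a *: f x + f y.

Definition linear_map (X Y : lmodType C) (f : X -> Y) : Prop :=
  linear_on (fun _ => True) f.

Definition ip2 (X : lmodType C) (ip : X -> X -> C) (u v : X * X) : C :=
  ip u.1 v.1 + ip u.2 v.2.

Definition ipS (X : lmodType C) (ip : X -> X -> C) (S : X * X -> X * X)
  (u v : X * X) : C := ip2 ip (S u) v.

Definition is_adjoint (X : lmodType C) (ip : X -> X -> C)
  (domA : X -> Prop) (A : X -> X) (domAs : X -> Prop) (As : X -> X) : Prop :=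
  forall f h : X,
    (domAs f /\ As f = h) <-> (forall g, domA g -> ip (A g) f = ip g h).

(* Mstar: the adjoint M^* of M, given by the formula S^{-1} {i As psi2, - i As psi1}, on (dom As)^2 *)
Definition Mstar (X : lmodType C) (Sinv : X * X -> X * X) (As : X -> X)
  (psi : X * X) : X * X :=
  Sinv ('i *: As psi.2, - ('i *: As psi.1)).

Definition dom2 (X : Type) (D : X -> Prop) (psi : X * X) : Prop :=
  D psi.1 /\ D psi.2.

Definition pairing_rev (Hmp Hpm : Type) (pair : Hmp -> Hpm -> C)
  (k : Hpm) (h : Hmp) : C := (pair h k)^*.

Definition reduction_tuple (X Hmp Hpm : lmodType C) (ip : X -> X -> C)
  (domAs : X -> Prop) (As : X -> X) (pair : Hmp -> Hpm -> C)
  (G : X -> Hmp) (W : Hmp -> Hpm) : Prop :=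
  [/\ linear_on domAs G,
      (forall h : Hmp, exists f, domAs f /\ G f = h),
      linear_map W, bijective W
    & (forall f g, domAs f -> domAs g ->
        ip (As f) g - ip f (As g) = pair (G f) (W (G g)))].

Definition m_boundary_tuple (V Hmp Hpm : Type) (ipT : V -> V -> C)
  (domT : V -> Prop) (T : V -> V) (pair : Hmp -> Hpm -> C)
  (Gamma0 : V -> Hmp) (Gamma1 : V -> Hpm) : Prop :=
  (forall (h : Hmp) (k : Hpm), exists f, domT f /\ Gamma0 f = h /\ Gamma1 f = k)
  /\ (forall f g, domT f -> domT g ->
        ipT (T f) g - ipT f (T g)
        = pairing_rev pair (Gamma1 f) (Gamma0 g) - pair (Gamma0 f) (Gamma1 g)).

End Defs.

(** The weight S cancels the S^{-1} in M^*, because S is selfadjoint, so the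
    Green form of M^* is i times the difference of two Green forms of A^* taken
    in crossed components.  The reduction identity of (G, W) rewrites these as
    pairings of G psi_2 with W G psi_1, which is (M2).  For (M1) one solves
    G psi_2 = h and G psi_1 = W^{-1} (-i k), using that G is onto and i (-i) = 1. *)

From HB Require Import structures.
From mathcomp Require Import all_boot all_order all_algebra.
From mathcomp Require Import ring.
Import Order.TTheory GRing.Theory Num.Theory Num.Syntax.
Local Open Scope ring_scope.

Set Implicit Arguments.
Unset Strict Implicit.
Unset Printing Implicit Defensive.

Section LinearLeft.
Variables (R : pzRingType) (U : lmodType R) (V : Type) (f : U -> V -> R).
Hypothesis f_linear_l : forall a x y z, f (a *: x + y) z = a * f x z + f y z.

Lemma pairing0l z : f 0 z = 0.
Proof.
have := f_linear_l 1 0 0 z; rewrite scale1r addr0 mul1r => f00.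
by apply: (addrI (f 0 z)); rewrite addr0 -f00.
Qed.

Lemma pairingZl a x z : f (a *: x) z = a * f x z.
Proof. by have := f_linear_l a x 0 z; rewrite !addr0 pairing0l addr0. Qed.

Lemma pairingNl x z : f (- x) z = - f x z.
Proof. by rewrite -scaleN1r pairingZl mulN1r. Qed.

End LinearLeft.

Section AntilinearRight.
Variables (C : numClosedFieldType) (U : Type) (V : lmodType C) (f : U -> V -> C).
Hypothesis f_antilinear_r :
  forall a z x y, f z (a *: x + y) = a^* * f z x + f z y.

Let conj_flip_linear a x y z :
  (f z (a *: x + y))^* = a * (f z x)^* + (f z y)^*.
Proof. by rewrite f_antilinear_r rmorphD rmorphM /= conjCK. Qed.

Lemma pairingZr a x z : f z (a *: x) = a^* * f z x.
Proof.
have := pairingZl (f := fun x z => (f z x)^*) conj_flip_linear a x z.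
by move=> /= /(congr1 Num.conj); rewrite rmorphM /= !conjCK.
Qed.

Lemma pairingNr x z : f z (- x) = - f z x.
Proof. by rewrite -scaleN1r pairingZr rmorphN rmorph1 mulN1r. Qed.

End AntilinearRight.

Lemma inner_product_antilinear_r (C : numClosedFieldType) (X : lmodType C)
    (ip : X -> X -> C) :
  inner_product ip -> forall a z x y, ip z (a *: x + y) = a^* * ip z x + ip z y.
Proof.
case=> ip_linear ip_conj _ _ a z x y.
by rewrite ip_conj ip_linear rmorphD rmorphM /= -!ip_conj.
Qed.

Section GreenFormOfMstar.
Variables (C : numClosedFieldType) (X : lmodType C) (ip : X -> X -> C).
Variables (S Sinv : X * X -> X * X) (As : X -> X).
Hypothesis ip_inner : inner_product ip.
Hypothesis S_selfadjoint : forall u v, ip2 ip (S u) v = ip2 ip u (S v).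
Hypothesis SinvK : cancel Sinv S.

Lemma ipS_Sinvl u v : ipS ip S (Sinv u) v = ip2 ip u v.
Proof. by rewrite /ipS SinvK. Qed.

Lemma ipS_Sinvr u v : ipS ip S u (Sinv v) = ip2 ip u v.
Proof. by rewrite /ipS S_selfadjoint SinvK. Qed.

Lemma Mstar_green f g :
  ipS ip S (Mstar Sinv As f) g - ipS ip S f (Mstar Sinv As g)
  = 'i * (ip (As f.2) g.1 - ip f.2 (As g.1))
    - 'i * (ip (As f.1) g.2 - ip f.1 (As g.2)).
Proof.
have [ip_linear _ _ _] := ip_inner.
have ip_antilinear := inner_product_antilinear_r ip_inner.
rewrite /Mstar ipS_Sinvl ipS_Sinvr /ip2 /=.
rewrite (pairingNl ip_linear) !(pairingZl ip_linear).
rewrite (pairingNr ip_antilinear) !(pairingZr ip_antilinear) conjCi.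
ring.
Qed.

End GreenFormOfMstar.

Section ReductionTupleBoundary.
Variables (C : numClosedFieldType) (X Hmp Hpm : lmodType C) (ip : X -> X -> C).
Variables (domAs : X -> Prop) (As : X -> X) (pair : Hmp -> Hpm -> C).
Variables (G : X -> Hmp) (W : Hmp -> Hpm).
Hypothesis ip_inner : inner_product ip.
Hypothesis pair_antilinear_r :
  forall (a : C) h k1 k2, pair h (a *: k1 + k2) = a^* * pair h k1 + pair h k2.
Hypothesis red : reduction_tuple ip domAs As pair G W.

Lemma reduction_boundary_onto h k :
  exists psi, dom2 domAs psi /\ G psi.2 = h /\ 'i *: W (G psi.1) = k.
Proof.
have [_ G_onto _ [Winv _ WinvK] _] := red.
have [f1 [dom_f1 G_f1]] := G_onto (Winv (- ('i *: k))).
have [f2 [dom_f2 G_f2]] := G_onto h.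
exists (f1, f2); split=> //=; split=> //.
by rewrite G_f1 WinvK scalerN scalerA -expr2 sqrCi scaleN1r opprK.
Qed.

Lemma reduction_boundary_green f g : dom2 domAs f -> dom2 domAs g ->
  pairing_rev pair ('i *: W (G f.1)) (G g.2) - pair (G f.2) ('i *: W (G g.1))
  = 'i * (ip (As f.2) g.1 - ip f.2 (As g.1))
    - 'i * (ip (As f.1) g.2 - ip f.1 (As g.2)).
Proof.
have [_ _ _ _ green] := red; have [_ ip_conj _ _] := ip_inner.
move=> [dom_f1 dom_f2] [dom_g1 dom_g2].
rewrite /pairing_rev !(pairingZr pair_antilinear_r) -!green //.
rewrite rmorphM rmorphB /= conjCK conjCi -!ip_conj.
ring.
Qed.

End ReductionTupleBoundary.

Theorem proposition6p1
  (C : numClosedFieldType) (X Hmp Hpm : lmodType C)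
  (ip : X -> X -> C)
  (domA : X -> Prop) (A : X -> X) (domAs : X -> Prop) (As : X -> X)
  (S Sinv : X * X -> X * X)
  (pair : Hmp -> Hpm -> C) (G : X -> Hmp) (W : Hmp -> Hpm) :
  inner_product ip ->
  (* A : densely defined (dense domain not expressed) symmetric, with adjoint A^* *)
  subspace domA -> linear_on domA A ->
  (forall f g, domA f -> domA g -> ip (A f) g = ip f (A g)) ->
  subspace domAs -> linear_on domAs As ->
  is_adjoint ip domA A domAs As ->
  (* S : bounded, uniformly positive, selfadjoint, with inverse Sinv *)
  linear_map S ->
  (forall u v, ip2 ip (S u) v = ip2 ip u (S v)) ->
  (exists K : C, forall u, ip2 ip (S u) (S u) <= K * ip2 ip u u) ->
  (exists c : C, 0 < c /\ forall u, c * ip2 ip u u <= ip2 ip (S u) u) ->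
  cancel S Sinv -> cancel Sinv S ->
  (* the duality pairing : sesquilinear (linear in 1st, antilinear in 2nd) *)
  (forall (a : C) h1 h2 k, pair (a *: h1 + h2) k = a * pair h1 k + pair h2 k) ->
  (forall (a : C) h k1 k2, pair h (a *: k1 + k2) = a^* * pair h k1 + pair h k2) ->
  reduction_tuple ip domAs As pair G W ->
  m_boundary_tuple (ipS ip S) (dom2 domAs) (Mstar Sinv As) pair
    (fun psi => G psi.2) (fun psi => 'i *: W (G psi.1)).
Proof.
move=> ip_inner _ _ _ _ _ _ _ S_selfadjoint _ _ _ SinvK _ pair_antilinear_r red.
split=> [h k | f g dom_f dom_g].
  by have [psi psiP] := reduction_boundary_onto red h k; exists psi.
rewrite (Mstar_green As ip_inner S_selfadjoint SinvK).
by rewrite (reduction_boundary_green ip_inner pair_antilinear_r red).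
Qed.
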